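(* Let $(\mathbb{R},\nu,\tau,\tau^{*})$ be a probabilistic normed space on the real line whose probabilistic norm $\nu$ has the LG-property, i.e. for every $x>0$, $\lim_{p\to\infty}\nu_{p}(x)=0$. If $A\subset\mathbb{R}$ is $D$-bounded, then $A$ is bounded in the classical sense (i.e. there is $k>0$ with $|p|\le k$ for all $p\in A$).
   Context: $\Delta^{+}$ is the set of functions $F:[-\infty,+\infty]\to[0,1]$ that are left-continuous on $\mathbb{R}$, nondecreasing, with $F(0)=0$ and $F(+\infty)=1$ (distribution functions), ordered pointwise; $D^{+}=\{F\in\Delta^{+}: l^{-}F(+\infty)=1\}$, where $l^{-}f(x)=\lim_{t\to x^{-}}f(t)$. $\varepsilon_0$ is the d.f. equal to $0$ for $x\le 0$ and $1$ for $x>0$. A triangle function is a map $\tau:\Delta^+\times\Delta^+\to\Delta^+$ that is associative, commutative, nondecreasing in each argument, and has $\varepsilon_0$ as unit. A probabilistic normed (PN) space is a quadruple $(V,\nu,\tau,\tau^* )$ with $V$ a real vector space, $\tau\le\tau^*$ continuous triangle functions (continuity w.r.t. weak convergence), and $\nu:V\to\Delta^+$, $p\mapsto\nu_p$, such that for all $p,q\in V$: (N1) $\nu_p=\varepsilon_0$ iff $p=\theta$ (the zero vector); (N2) $\nu_{-p}=\nu_p$; (N3) $\nu_{p+q}\ge\tau(\nu_p,\nu_q)$; (N4) $\nu_p\le\tau^*(\nu_{\lambda p},\nu_{(1-\lambda)p})$ for all $\lambda\in[0,1]$. For a nonempty $A\subseteq V$, the probabilistic radius is $R_A(x)=l^{-}\inf\{\nu_p(x):p\in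 A\}$ for $x\in[0,+\infty)$ and $R_A(+\infty)=1$; $A$ is called $D$-bounded if $R_A\in D^{+}$. *)

From HB Require Import structures.
From mathcomp Require Import all_boot all_order all_algebra.
From mathcomp Require Import all_classical all_reals all_analysis.
Set Implicit Arguments. Unset Strict Implicit. Unset Printing Implicit Defensive.
Import Order.TTheory GRing.Theory Num.Theory.
Import numFieldNormedType.Exports.
Local Open Scope classical_set_scope.
Local Open Scope ring_scope.

Section PN.
Variable R : realType.

Definition dfun := \bar R -> R.

Definition lminus (f : R -> R) (x : R) : R := lim (f @ x^'-).

Definition distfun (F : dfun) : Prop :=
  [/\ (forall x, 0 <= F x <= 1),
      (forall x y : \bar R, (x <= y)%E -> F x <= F y),
      (forall x : R, (fun t : R => F t%:E) @ x^'- --> F x%:E),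
      F 0%E = 0 & F +oo%E = 1].

(* D^+ : l^- F(+oo) = 1 *)
Definition Dplus (F : dfun) : Prop :=
  distfun F /\ (fun t : R => F t%:E) @ +oo --> (1 : R).

Definition dle (F G : dfun) : Prop := forall x, F x <= G x.

Definition eps0 : dfun := fun x => if (x <= 0)%E then 0 else 1.

Definition wconv (Fn : nat -> dfun) (F : dfun) : Prop :=
  forall x : R, 0 < x -> {for x, continuous (fun t : R => F t%:E)} ->
    (fun n => Fn n x%:E) @ \oo --> F x%:E.

Definition triangle_fun (tau : dfun -> dfun -> dfun) : Prop :=
  [/\ (forall F G, distfun F -> distfun G -> distfun (tau F G)),
      (forall F G H, distfun F -> distfun G -> distfun H ->
         tau (tau F G) H = tau F (tau G H)),
      (forall F G, distfun F -> distfun G -> tau F G = tau G F),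
      (forall F1 F2 G, distfun F1 -> distfun F2 -> distfun G ->
         dle F1 F2 -> dle (tau F1 G) (tau F2 G)) &
      (forall F, distfun F -> tau F eps0 = F)].

Definition cont_triangle_fun (tau : dfun -> dfun -> dfun) : Prop :=
  triangle_fun tau /\
  forall (Fn Gn : nat -> dfun) (F G : dfun),
    (forall n, distfun (Fn n)) -> (forall n, distfun (Gn n)) ->
    distfun F -> distfun G -> wconv Fn F -> wconv Gn G ->
    wconv (fun n => tau (Fn n) (Gn n)) (tau F G).

Definition PN_space (V : lmodType R) (nu : V -> dfun)
    (tau taus : dfun -> dfun -> dfun) : Prop :=
  [/\ cont_triangle_fun tau, cont_triangle_fun taus,
      (forall F G, distfun F -> distfun G -> dle (tau F G) (taus F G)),
      (forall p, distfun (nu p)) &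
      [/\ (forall p, nu p = eps0 <-> p = 0),
          (forall p, nu (- p) = nu p),
          (forall p q, dle (tau (nu p) (nu q)) (nu (p + q))) &
          (forall p (l : R), 0 <= l <= 1 ->
             dle (nu p) (taus (nu (l *: p)) (nu ((1 - l) *: p))))]].

Definition prob_radius (V : lmodType R) (nu : V -> dfun) (A : set V) : dfun :=
  fun x => match x with
           | x%:E => if 0 <= x then
                       lminus (fun t : R => inf [set nu p t%:E | p in A]) x
                     else 0
           | +oo%E => 1
           | -oo%E => 0
           end.

Definition D_bounded (V : lmodType R) (nu : V -> dfun) (A : set V) : Prop :=
  Dplus (prob_radius nu A).

Definition LG_property (nu : R^o -> dfun) : Prop :=
  forall x : R, 0 < x -> (fun p : R => nu p x%:E) @ +oo --> (0 : R).

End PN.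

(** If [A] were unbounded, the LG-property together with [nu (-p) = nu p]
    would give points [p] of [A] with [nu p t] arbitrarily small for every
    [t > 0], so the infimum defining the probabilistic radius, and hence
    [R_A t] itself, would vanish for all [t > 0].  Then [R_A] tends to [0]
    at [+oo] instead of [1], so [A] is not [D]-bounded. *)
From mathcomp Require Import all_boot all_order all_algebra.
From mathcomp Require Import all_classical all_reals all_analysis.
Import Order.TTheory GRing.Theory Num.Theory.
Import numFieldNormedType.Exports.
Local Open Scope classical_set_scope.
Local Open Scope ring_scope.

Section ProbRadius.
Context {R : realType}.

Lemma even_normr {T : Type} {f : R -> T} :
  (forall x, f (- x) = f x) -> forall x, f `|x| = f x.
Proof.
move=> fN x; have [x0|x0] := leP 0 x; first by rewrite ger0_norm.
by rewrite ltr0_norm // fN.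
Qed.

Lemma not_bounded_normr_gt (A : set R) :
  ~ (exists k : R, 0 < k /\ (forall p, A p -> `|p| <= k)) ->
  forall k, exists2 p, A p & k < `|p|.
Proof.
move=> Abnd k; apply: contrapT => noAk; apply: Abnd.
exists (Num.max k 1); split; first by rewrite lt_max ltr01 orbT.
move=> p Ap; rewrite le_max leNgt; apply/orP; left.
by apply/negP => kp; apply: noAk; exists p.
Qed.

Lemma inf_unbounded_cvg0 {T : Type} {A : set T} {h : T -> R} {g : R -> R} :
  (forall k, exists2 p, A p & k < h p) -> (forall x, 0 <= g x) ->
  g @ +oo --> 0 -> inf [set g (h p) | p in A] = 0.
Proof.
move=> hA g_ge0 g0.
have [p0 Ap0 _] := hA 0.
have imA0 : [set g (h p) | p in A] !=set0 by exists (g (h p0)), p0.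
apply/eqP; rewrite eq_le; apply/andP; split; last first.
  by apply: lb_le_inf => // _ [p _ <-].
apply/ler_addgt0Pr => e e0; rewrite add0r.
have [M [_ gM]] := (cvgrPdist_lt _ _).1 g0 e e0.
have [p Ap Mp] := hA M.
apply: (le_trans (ge_inf _ _)); [by exists 0 => _ [q _ <-] | by exists p |].
by have := gM _ Mp; rewrite /= sub0r normrN ger0_norm // => /ltW.
Qed.

Lemma prob_radius_eq0 {V : lmodType R} {nu : V -> dfun R} {A : set V} :
  (forall t, 0 < t -> inf [set nu p t%:E | p in A] = 0) ->
  forall t, 0 < t -> prob_radius nu A t%:E = 0.
Proof.
move=> inf0 t t0; rewrite /prob_radius (ltW t0) /lminus.
apply: cvg_lim => //; apply: cvg_near_cst.
by near=> s; apply: inf0; near: s; exact: nbhs_left_gt.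
Unshelve. all: by end_near.
Qed.

Lemma Dplus_not_near0 {F : dfun R} :
  Dplus F -> ~ \forall t \near +oo, F t%:E = 0.
Proof.
move=> [_ F1] F0; have := @oner_neq0 R.
by rewrite (cvg_unique (@Rhausdorff R) F1 (cvg_near_cst _ F0)) eqxx.
Qed.

End ProbRadius.

Theorem lemma13 (R : realType) (nu : R^o -> dfun R)
    (tau taus : dfun R -> dfun R -> dfun R) (A : set R^o) :
  PN_space nu tau taus -> LG_property nu ->
  A !=set0 -> D_bounded nu A ->
  exists k : R, 0 < k /\ (forall p, A p -> `|p| <= k).
Proof.
move=> [_ _ _ nu_df [_ nuN _ _]] LG _ AD.
apply: contrapT => /not_bounded_normr_gt Aunb.
have inf0 t : 0 < t -> inf [set nu p t%:E | p in A] = 0.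
  move=> t0; rewrite -(eq_imagel (f := fun p => nu `|p| t%:E)); last first.
    by move=> p _; rewrite (even_normr nuN).
  apply: (inf_unbounded_cvg0 (g := fun p => nu p t%:E) Aunb); last exact: LG.
  by move=> p; have [/(_ t%:E) /andP[]] := nu_df p.
apply: (Dplus_not_near0 AD); near=> t.
apply: (prob_radius_eq0 inf0); near: t; exact: nbhs_pinfty_gt.
Unshelve. all: by end_near.
Qed.
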